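(* The only novel partition of length $4$ is $(1,1,1,1)$.
   Context: An integer partition is $\lambda=(\lambda_1,\dots,\lambda_k)$ with integers $\lambda_1\ge\dots\ge\lambda_k\ge 1$; $k$ is its length. For $v\in\mathbb{Z}^k$ let $v^{\perp B}=\{x\in\{-1,1\}^k: v\cdot x=0\}$; $\lambda^{\perp B}$ is this set for $(\lambda_1,\dots,\lambda_k)$. $V_\lambda\subset\mathbb{Z}^k$ is the set of vectors obtained from $(\lambda_1,\dots,\lambda_k)$ by permuting coordinates and changing signs of some coordinates, with first coordinate positive. For $I\subset\{1,\dots,m\}$, $\mathrm{Proj}_I:\{-1,1\}^m\to\{-1,1\}^{|I|}$ keeps the coordinates indexed by $I$. Reduction: for partitions $\mu$ of length $m$ and $\lambda$ of length $k\le m$, $\mu\Rightarrow\lambda$ iff there exist $I\subset\{1,\dots,m\}$, $|I|=k$, and $v\in V_\lambda$ with $\mathrm{Proj}_I(\mu^{\perp B})\subset v^{\perp B}$. $\mu$ strictly reduces to $\lambda$ iff $\mu\Rightarrow\lambda$ and not $\lambda\Rightarrow\mu$. Partitions $\lambda,\mu$ of the same length are equivalent iff there is $w\in V_\mu$ with $\lambda^{\perp B}=w^{\perp B}$. A partition $\lambda$ is novel iff $\lambda^{\perp B}\neq\emptyset$, $\lambda$ strictly reduces to no partition, and $\lambda$ is lexicographically smallest among partitions equivalent to it. *)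

From HB Require Import structures.
From mathcomp Require Import all_boot all_order all_algebra.
Set Implicit Arguments. Unset Strict Implicit. Unset Printing Implicit Defensive.
Import Order.TTheory GRing.Theory Num.Theory.
Local Open Scope ring_scope.

Definition is_partition (l : seq nat) : bool :=
  [&& (0 < size l)%N, sorted geq l & all (fun a => (0 < a)%N) l].

Definition pm1 (a : int) : bool := (a == 1) || (a == -1).

Definition dotz (v x : seq int) : int := \sum_(p <- zip v x) p.1 * p.2.

Definition perpB (v : seq int) (x : seq int) : bool :=
  [&& size x == size v, all pm1 x & dotz v x == 0].

Definition intvec (l : seq nat) : seq int := map Posz l.

Definition inV (lam : seq nat) (v : seq int) : Prop :=
  exists (p : seq nat) (e : seq int),
    [/\ perm_eq p lam, size e = size lam, all pm1 e,
        v = [seq q.1 * Posz q.2 | q <- zip e p] & 0 < head 0 v].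

(* mu => lam ; the index set I is encoded as a bitmask b of size m,
   Proj_I x = mask b x (coordinates in I, in increasing order) *)
Definition reduces (mu lam : seq nat) : Prop :=
  (size lam <= size mu)%N /\
  exists b : bitseq,
    [/\ size b = size mu, count id b = size lam &
        exists v, inV lam v /\
          forall x, perpB (intvec mu) x -> perpB v (mask b x)].

Definition strictly_reduces (mu lam : seq nat) : Prop :=
  reduces mu lam /\ ~ reduces lam mu.

Definition equivalent (lam mu : seq nat) : Prop :=
  size lam = size mu /\
  exists w, inV mu w /\ forall x, perpB (intvec lam) x = perpB w x.

Fixpoint lex_le (s t : seq nat) : bool :=
  match s, t with
  | [::], _ => true
  | _ :: _, [::] => false
  | a :: s', b :: t' => (a < b)%N || ((a == b) && lex_le s' t')
  end.

Definition novel (lam : seq nat) : Prop :=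
  [/\ is_partition lam,
      exists x, perpB (intvec lam) x,
      forall nu, is_partition nu -> ~ strictly_reduces lam nu &
      forall mu, is_partition mu -> equivalent mu lam -> lex_le lam mu].

From mathcomp Require Import all_boot all_order all_algebra zify.
Set Implicit Arguments. Unset Strict Implicit. Unset Printing Implicit Defensive.
Import Order.TTheory GRing.Theory Num.Theory.
Local Open Scope ring_scope.

(* Let lam = (a,b,c,d) with a >= b >= c >= d >= 1.
   (=>) If a <> d, every sign vector x with a x1 + b x2 + c x3 + d x4 = 0
   has x1 = -x2 (otherwise a + b <= c + d forces a = b = c = d), so projecting
   onto the first two coordinates gives lam => (1,1); since (1,1) is shorter
   than lam it cannot reduce back, so the reduction is strict and lam is not
   novel.  Hence lam = (a,a,a,a), which has the same solutions as (1,1,1,1)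
   because scaling by a nonzero constant does not change v^{perp B}; lexical
   minimality then forces a = 1.
   (<=) (1,1,1,1) has solutions and is lexically below every positive sequence
   of length 4.  If (1,1,1,1) => nu, testing the reduction on the six balanced
   sign vectors forces the projection to be the identity and the vector v in
   V_nu to be constant; as the absolute values of v are a permutation of nu,
   nu = (n,n,n,n), which reduces back to (1,1,1,1): no reduction is strict. *)

Lemma dotz_cons (a y : int) v x : dotz (a :: v) (y :: x) = a * y + dotz v x.
Proof. by rewrite /dotz /= big_cons. Qed.

Lemma dotz_nil x : dotz [::] x = 0.
Proof. by case: x => [|? ?]; rewrite /dotz /= big_nil. Qed.

Lemma dotz_scale (c : int) v x : dotz (map ( *%R c) v) x = c * dotz v x.
Proof.
elim: v x => [|a v IH] [|y x] /=; rewrite ?dotz_nil ?mulr0 //.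
  by case: v {IH}; rewrite /dotz /= big_nil mulr0.
by rewrite !dotz_cons IH mulrDr mulrA.
Qed.

Lemma perpB_scale (c : int) v : c != 0 -> perpB (map ( *%R c) v) =1 perpB v.
Proof. by move=> c0 x; rewrite /perpB size_map dotz_scale mulf_eq0 (negPf c0). Qed.

Lemma perpB_const k n : (0 < n)%N ->
  perpB (intvec (nseq k n)) =1 perpB (intvec (nseq k 1%N)).
Proof.
move=> n0; have -> : intvec (nseq k n) = map ( *%R (Posz n)) (intvec (nseq k 1%N)).
  by elim: k => //= k ->; rewrite mulr1.
by apply: perpB_scale; rewrite -lt0n.
Qed.

Lemma inV_abs lam v : inV lam v -> perm_eq [seq `|z|%N | z <- v] lam.
Proof.
case=> p [e [pp se ae -> _]]; rewrite -map_comp.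
suff -> : [seq (absz \o (fun q => q.1 * Posz q.2)) q | q <- zip e p] = p by [].
move: se ae; rewrite -(perm_size pp).
elim: e p {pp} => [|a e IH] [|n p] //= [se] /andP [/orP [] /eqP -> ae];
  by rewrite ?mul1r ?mulN1r ?abszN (IH p).
Qed.

Lemma inV_shape lam v : all (fun a => 0 < a)%N lam -> inV lam v ->
  size v = size lam /\ all (fun z => z != 0) v.
Proof.
move=> pos /inV_abs pv; split; first by rewrite -(perm_size pv) size_map.
by rewrite -(perm_all _ pv) all_map in pos; apply: sub_all pos => z; rewrite /= absz_gt0.
Qed.

Lemma inV_self lam : all (fun a => 0 < a)%N lam -> (0 < size lam)%N ->
  inV lam (intvec lam).
Proof.
move=> pos nz; exists lam, (nseq (size lam) 1); split => //.
- by rewrite size_nseq.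
- by rewrite all_nseq orbT.
- by rewrite /intvec; elim: lam {pos nz} => //= a lam ->; rewrite mul1r.
- by case: lam pos nz => //= a lam /andP [a0 _]; rewrite ltz_nat.
Qed.

Lemma reduces_const_ones k n : (0 < k)%N -> (0 < n)%N ->
  reduces (nseq k n) (nseq k 1%N).
Proof.
move=> k0 n0; split; first by rewrite !size_nseq.
exists (nseq k true); rewrite !size_nseq count_nseq mul1n; split => //.
exists (intvec (nseq k 1%N)); split.
  by apply: inV_self; rewrite ?size_nseq // all_nseq orbT.
move=> x; rewrite perpB_const // => px.
have sx : size x = k by case/and3P: px => /eqP ->; rewrite size_map size_nseq.
by rewrite mask_true ?sx.
Qed.

Lemma equivalent_const_ones k n : (0 < k)%N -> (0 < n)%N ->
  equivalent (nseq k 1%N) (nseq k n).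
Proof.
move=> k0 n0; split; first by rewrite !size_nseq.
exists (intvec (nseq k n)); split; last by move=> x; rewrite perpB_const.
by apply: inV_self; rewrite ?size_nseq // all_nseq n0 orbT.
Qed.

Lemma lex_ones s : all (fun a => 0 < a)%N s -> lex_le (nseq (size s) 1%N) s.
Proof. by elim: s => //= [[|[|m]]] s IH //= /andP [_ /IH]. Qed.

Lemma perm_nseq_eq (T : eqType) (x : T) n s : perm_eq (nseq n x) s -> s = nseq n x.
Proof.
move=> pxs; have -> : n = size s by rewrite -(perm_size pxs) size_nseq.
apply/all_pred1P.
by rewrite -(perm_all _ pxs) all_pred1_nseq.
Qed.

Lemma perpB4 (a b c d : int) x : perpB [:: a; b; c; d] x ->
  exists x1 x2 x3 x4, x = [:: x1; x2; x3; x4] /\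
    [/\ pm1 x1, pm1 x2, pm1 x3, pm1 x4 & a * x1 + b * x2 + c * x3 + d * x4 = 0].
Proof.
case: x => [|x1 [|x2 [|x3 [|x4 [|? ?]]]]] //.
rewrite /perpB !dotz_cons dotz_nil addr0 !addrA /= => /andP [/and5P [h1 h2 h3 h4 _] /eqP E].
by exists x1, x2, x3, x4.
Qed.

Lemma pm1E (x : int) : pm1 x -> x = 1 \/ x = -1.
Proof. by case/orP => /eqP; auto. Qed.

(* Key inequality: for a >= b >= c >= d >= 1 not all equal, a solution can
   never give the two largest parts the same sign, since then
   a + b = |c x3 + d x4| <= c + d. *)
Lemma unbalanced_sign_pair (a b c d : nat) (x1 x2 x3 x4 : int) :
  (d <= c)%N -> (c <= b)%N -> (b <= a)%N -> (0 < d)%N -> a != d ->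
  pm1 x1 -> pm1 x2 -> pm1 x3 -> pm1 x4 ->
  Posz a * x1 + Posz b * x2 + Posz c * x3 + Posz d * x4 = 0 -> x1 + x2 = 0.
Proof.
move=> dc cb ba d0 /eqP ad.
by do 4![move/pm1E => [->|->]] => E; lia.
Qed.

Lemma reduces_to_pair (a b c d : nat) : is_partition [:: a; b; c; d] -> a != d ->
  reduces [:: a; b; c; d] [:: 1; 1]%N.
Proof.
case/and3P=> _ /= /and4P [ba cb dc _] /and5P [_ _ _ d0 _] ad.
split => //; exists [:: true; true; false; false]; split => //.
exists [:: 1; 1]; split; first by apply: inV_self.
move=> _ /perpB4 [x1 [x2 [x3 [x4 [-> [h1 h2 h3 h4 E]]]]]].
have x12 := unbalanced_sign_pair dc cb ba d0 ad h1 h2 h3 h4 E.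
by rewrite /perpB /= h1 h2 !dotz_cons dotz_nil !mul1r addr0 x12.
Qed.

(* It suffices to test the six balanced sign
   vectors; the remaining finite case analysis is linear arithmetic. *)
Lemma ones4_projection_constant (v : seq int) (b : bitseq) :
  size b = 4%N -> size v = count id b -> all (fun z => z != 0) v -> 0 < head 0 v ->
  (forall x, perpB (intvec (nseq 4 1%N)) x -> perpB v (mask b x)) ->
  v = nseq 4 (head 0 v).
Proof.
move=> sb sv nz hv H.
have [H1 H2 H3] : [/\ perpB v (mask b [:: 1; 1; -1; -1]),
  perpB v (mask b [:: 1; -1; 1; -1]) & perpB v (mask b [:: 1; -1; -1; 1])].
  by split; apply: H; rewrite /perpB /= !dotz_cons dotz_nil.
have [H4 H5 H6] : [/\ perpB v (mask b [:: -1; -1; 1; 1]),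
  perpB v (mask b [:: -1; 1; -1; 1]) & perpB v (mask b [:: -1; 1; 1; -1])].
  by split; apply: H; rewrite /perpB /= !dotz_cons dotz_nil.
move: H1 H2 H3 H4 H5 H6 sv nz hv {H}.
case: b sb => [|b1 [|b2 [|b3 [|b4 [|? ?]]]]] // _.
case: b1; case: b2; case: b3; case: b4;
case: v => [|v1 [|v2 [|v3 [|v4 [|? ?]]]]] //;
rewrite /perpB /= ?dotz_cons ?dotz_nil /= => /eqP H1 /eqP H2 /eqP H3 /eqP H4 /eqP H5 /eqP H6 _;
rewrite ?andbT => nz hv.
all: try by exfalso; lia.
by have [-> -> ->] : [/\ v2 = v1, v3 = v1 & v4 = v1] by split; lia.
Qed.

Lemma reduces_from_ones4 nu : is_partition nu -> reduces (nseq 4 1%N) nu ->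
  exists2 n, (0 < n)%N & nu = nseq 4 n.
Proof.
case/and3P=> _ _ pos [_ [b [sb cb [v [iv H]]]]].
have [sv nz] := inV_shape pos iv.
have hv : 0 < head 0 v by case: iv => p [e []].
have vc := ones4_projection_constant sb (etrans sv (esym cb)) nz hv H.
move: hv vc; set c := head 0 v => c0 vc.
exists `|c|%N; first by rewrite absz_gt0 gt_eqF.
by apply: perm_nseq_eq; have := inV_abs iv; rewrite vc map_nseq.
Qed.

Theorem mainTheorem8 (lam : seq nat) :
  is_partition lam -> size lam = 4 -> (novel lam <-> lam = [:: 1; 1; 1; 1]).
Proof.
move=> pl sl; split.
- case=> _ _ irreducible minimal.
  case: lam pl sl irreducible minimal => [|a [|b [|c [|d [|? ?]]]]] // pl _ irreducible minimal.
  have [ad|ad] := eqVneq a d; last first.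
    (* a non-constant lam strictly reduces to the shorter (1,1) *)
    by case: (irreducible [:: 1; 1]%N isT); split; [exact: reduces_to_pair | case].
  case/and3P: pl => _ /= /and4P [ba cb dc _] /and5P [a0 _ _ _ _].
  have [eb ec] : b = a /\ c = a by subst d; lia.
  (* the constant lam is equivalent to (1,1,1,1), so it must be it *)
  subst b c d; have := minimal (nseq 4 1%N) isT (@equivalent_const_ones 4 a isT a0).
  by case: a a0 {irreducible minimal ba cb dc} => [|[|a]].
- move=> ->; split => //.
  + by exists [:: 1; -1; 1; -1]; rewrite /perpB /= !dotz_cons dotz_nil.
  + move=> nu pnu [red]; apply.
    by have [n n0 ->] := reduces_from_ones4 pnu red; apply: reduces_const_ones.
  + by move=> mu /and3P [_ _ pos] [smu _]; have := lex_ones pos; rewrite smu.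
Qed.
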